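(* In the setting described in the context, the discrete Lagrange multiplier $\sigma_h\in V_{nc}$ satisfies $$\sigma_h(z)\le 0\quad\text{for all } z\in\mathcal{M}_h^i,\qquad \sigma_h(z)=0\quad\text{for all } z\in\mathcal{M}_h^i \text{ with } u_h(z)>\chi(z).$$
   Context: $\Omega\subset\mathbb{R}^d$ ($1\le d\le3$) is a bounded polyhedral domain, $f\in L^2(\Omega)$, and the obstacle $\chi\in C(\bar\Omega)\cap H^1(\Omega)$ satisfies $\chi\le 0$ on $\partial\Omega$. $\mathcal{T}_h$ is a conforming shape-regular triangulation of $\Omega$ into closed triangles; $|T|$ is the area of $T$; $\mathcal{M}_h$ is the set of all edge midpoints, $\mathcal{M}_h^i$ the set of midpoints of interior edges, $\mathcal{V}_h^i$ the set of interior vertices, $\mathcal{M}_T$ the set of the three edge midpoints of $T$. $V_h=\{v\in H^1_0(\Omega): v|_T\in\mathbb{P}_2(T)\ \forall T\}$ with nodal basis $\{\psi_z: z\in\mathcal{V}_h^i\cup\mathcal{M}_h^i\}$. $V_{nc}$ is the Crouzeix–Raviart space (piecewise affine functions continuous at interior edge midpoints and vanishing at boundary edge midpoints). For $v\in V_{nc}$, $\Pi_hv:=\sum_{z\in\mathcal{M}_h^i}v(z)\psi_z\in V_h$. Let $a(v,w)=(\nabla v,\nabla w)$ (with $(\cdot,\cdot)$ the $L^2(\Omega)$ inner product). Let $\mathcal{K}_h=\{v_h\in V_h: v_h(z)\ge\chi(z)\ \forall z\in\mathcal{M}_h\}$ and let $u_h\in\mathcal{K}_h$ be the unique solution of $a(u_h,v_h-u_h)\ge(f,v_h-u_h)$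 for all $v_h\in\mathcal{K}_h$. Define the inner product on $V_{nc}$ by $\langle w,v\rangle_h=\sum_{T\in\mathcal{T}_h}\frac{|T|}{3}\sum_{z\in\mathcal{M}_T}w(z)v(z)$, and let $\sigma_h\in V_{nc}$ be defined by $\langle\sigma_h,v_h\rangle_h=(f,\Pi_hv_h)-a(u_h,\Pi_hv_h)$ for all $v_h\in V_{nc}$. *)

From HB Require Import structures.
From mathcomp Require Import all_boot all_order all_algebra.
From mathcomp Require Import all_classical all_reals all_analysis.
Set Implicit Arguments.
Unset Strict Implicit.
Unset Printing Implicit Defensive.
Import Order.TTheory GRing.Theory Num.Theory.
Import numFieldNormedType.Exports.
Local Open Scope classical_set_scope.
Local Open Scope ring_scope.

Section FEM.
Variable R : realType.

Local Notation pt := (R * R)%type.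
Local Notation tri := (pt * pt * pt)%type.

Definition pcomb (l1 l2 l3 : R) (a b c : pt) : pt :=
  (l1 * a.1 + l2 * b.1 + l3 * c.1, l1 * a.2 + l2 * b.2 + l3 * c.2).

Definition verts (t : tri) : seq pt := [:: t.1.1; t.1.2; t.2].

Definition tri_set (t : tri) : set pt :=
  [set x | exists l1 l2 l3 : R, [/\ 0 <= l1, 0 <= l2, 0 <= l3,
     l1 + l2 + l3 = 1 & x = pcomb l1 l2 l3 t.1.1 t.1.2 t.2]].

Definition segment (a b : pt) : set pt :=
  [set x | exists l : R, [/\ 0 <= l, l <= 1 & x = pcomb (1 - l) l 0 a b a]].

Definition det2 (a b c : pt) : R :=
  (b.1 - a.1) * (c.2 - a.2) - (c.1 - a.1) * (b.2 - a.2).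

Definition area (t : tri) : R := `|det2 t.1.1 t.1.2 t.2| / 2.

Definition nondegenerate (t : tri) : Prop := det2 t.1.1 t.1.2 t.2 != 0.

Definition edges (t : tri) : seq (pt * pt) :=
  [:: (t.1.2, t.2); (t.2, t.1.1); (t.1.1, t.1.2)].

Definition midpt (a b : pt) : pt := ((a.1 + b.1) / 2, (a.2 + b.2) / 2).

Definition mids (t : tri) : seq pt := [seq midpt e.1 e.2 | e <- edges t].

Definition conforming (Th : seq tri) : Prop :=
  uniq Th /\ (forall t, t \in Th -> nondegenerate t) /\
  forall t t', t \in Th -> t' \in Th -> t != t' ->
    [\/ tri_set t `&` tri_set t' = set0,
        (exists v, [/\ v \in verts t, v \in verts t' &
                      tri_set t `&` tri_set t' = [set v]]) |
        (exists a b, [/\ a != b, (a \in verts t) && (a \in verts t'),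
                        (b \in verts t) && (b \in verts t') & tri_set t `&` tri_set t' = segment a b])].

Definition Omega_bar (Th : seq tri) : set pt := \bigcup_(t in [set t | t \in Th]) tri_set t.
Definition Omega (Th : seq tri) : set pt := interior (Omega_bar Th).
Definition bdry (Th : seq tri) : set pt := Omega_bar Th `\` Omega Th.

Definition Mh (Th : seq tri) : seq pt := undup (flatten (map mids Th)).

Definition int_edge (Th : seq tri) (e : pt * pt) : Prop :=
  ~ (segment e.1 e.2 `<=` bdry Th).
Definition Mhi (Th : seq tri) : seq pt :=
  undup [seq midpt e.1 e.2 | e <- flatten (map edges Th) & `[< int_edge Th e >]].

Definition is_int_vertex (Th : seq tri) (z : pt) : Prop :=
  (exists2 t, t \in Th & z \in verts t) /\ Omega Th z.

Definition is_node (Th : seq tri) (z : pt) : Prop :=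
  is_int_vertex Th z \/ z \in Mhi Th.

Definition P2 (p : pt -> R) : Prop :=
  exists a0 a1 a2 a3 a4 a5 : R, forall x : pt,
    p x = a0 + a1 * x.1 + a2 * x.2 + a3 * x.1 ^+ 2 + a4 * x.1 * x.2 + a5 * x.2 ^+ 2.
Definition P1 (p : pt -> R) : Prop :=
  exists a0 a1 a2 : R, forall x : pt, p x = a0 + a1 * x.1 + a2 * x.2.

(* V_h : continuous piecewise P2 functions vanishing on the boundary
   (for piecewise polynomials this is exactly membership in H^1_0) *)
Definition Vh (Th : seq tri) (v : pt -> R) : Prop :=
  [/\ forall t, t \in Th -> exists2 p, P2 p & forall x, tri_set t x -> v x = p x,
      {within Omega_bar Th, continuous v} &
      forall x, bdry Th x -> v x = 0].

(* Crouzeix--Raviart functions, represented by their affine pieces: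
   w t is the affine function w|_T; continuity at interior midpoints,
   vanishing at boundary midpoints *)
Definition Vnc (Th : seq tri) (w : tri -> pt -> R) : Prop :=
  [/\ forall t, t \in Th -> P1 (w t),
      forall t t' z, t \in Th -> t' \in Th -> z \in mids t -> z \in mids t' ->
        w t z = w t' z &
      forall t z, t \in Th -> z \in mids t -> z \notin Mhi Th -> w t z = 0].

Definition tri0 : tri := ((0, 0), (0, 0), (0, 0)).

Definition crval (Th : seq tri) (w : tri -> pt -> R) (z : pt) : R :=
  w (nth tri0 Th (find (fun t => z \in mids t) Th)) z.

Definition ip_h (Th : seq tri) (w v : tri -> pt -> R) : R :=
  \sum_(t <- Th) (area t / 3 * \sum_(z <- mids t) w t z * v t z).

Definition nodal_basis (Th : seq tri) (psi : pt -> pt -> R) : Prop :=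
  forall z, is_node Th z ->
    Vh Th (psi z) /\ forall y, is_node Th y -> psi z y = (y == z)%:R.

Definition Pi_h (Th : seq tri) (psi : pt -> pt -> R) (w : tri -> pt -> R) : pt -> R :=
  fun x => \sum_(z <- Mhi Th) crval Th w z * psi z x.

Definition leb2 := ((@lebesgue_measure R) \x (@lebesgue_measure R))%E.

(* partial derivatives (classical, existing a.e. for piecewise polynomials) *)
Definition dx (v : pt -> R) (x : pt) : R := derive1 (fun s => v (s, x.2)) x.1.
Definition dy (v : pt -> R) (x : pt) : R := derive1 (fun s => v (x.1, s)) x.2.

Definition a_form (Th : seq tri) (v w : pt -> R) : R :=
  Rintegral leb2 (Omega Th) (fun x => dx v x * dx w x + dy v x * dy w x).
Definition L2ip (Th : seq tri) (f v : pt -> R) : R :=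
  Rintegral leb2 (Omega Th) (fun x => f x * v x).

Definition L2 (D : set pt) (g : pt -> R) : Prop :=
  measurable_fun D g /\ leb2.-integrable D (fun x => (g x ^+ 2)%:E).

Definition pder (b : bool) (g : pt -> R) : pt -> R := if b then dx g else dy g.
Definition test_fun (D : set pt) (phi : pt -> R) : Prop :=
  (forall s : seq bool, continuous (foldr pder phi s) /\
     forall x : pt, derivable (fun r => foldr pder phi s (r, x.2)) x.1 1 /\
                    derivable (fun r => foldr pder phi s (x.1, r)) x.2 1) /\
  exists K : set pt, [/\ compact K, K `<=` D & forall x, ~ K x -> phi x = 0].

Definition H1 (D : set pt) (g : pt -> R) : Prop :=
  L2 D g /\ exists g1 g2 : pt -> R, [/\ L2 D g1, L2 D g2 &
    forall phi, test_fun D phi ->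
      Rintegral leb2 D (fun x => g x * dx phi x) = - Rintegral leb2 D (fun x => g1 x * phi x) /\
      Rintegral leb2 D (fun x => g x * dy phi x) = - Rintegral leb2 D (fun x => g2 x * phi x)].

Definition Kh (Th : seq tri) (chi : pt -> R) (v : pt -> R) : Prop :=
  Vh Th v /\ forall z, z \in Mh Th -> chi z <= v z.

End FEM.

(* Testing the discrete variational inequality with u_h + k psi_z, where
   psi_z is the P2 nodal function of an interior midpoint z, turns it into
   k sigma_h(z) m_z <= 0: indeed Pi_h maps the Crouzeix-Raviart basis function
   phi_z to psi_z, and <sigma_h, phi_z>_h = m_z sigma_h(z) with m_z > 0 the sum
   of |T|/3 over the triangles having z as an edge midpoint. The choice k = 1
   is always admissible and gives sigma_h(z) <= 0; if u_h(z) > chi(z), then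
   k = chi(z) - u_h(z) < 0 is admissible as well and gives sigma_h(z) >= 0. *)
From Pilot Require Import Defs.
From HB Require Import structures.
From mathcomp Require Import all_boot all_order all_algebra.
From mathcomp Require Import all_classical all_reals all_analysis.
From mathcomp Require Import ring.
Import Order.TTheory GRing.Theory Num.Theory.
Import numFieldNormedType.Exports.
Local Open Scope classical_set_scope.
Local Open Scope ring_scope.
Set Implicit Arguments.
Unset Strict Implicit.

Section CrouzeixRaviartBasis.
Variable R : realType.
Local Notation pt := (R * R)%type.
Local Notation tri := (pt * pt * pt)%type.

(* Since det2 x b c / det2 a b c is the barycentric coordinate of x relative
   to a, this affine function is 1 at the midpoint of bc and 0 at the other
   two edge midpoints. *)
Definition cr_hat (a b c : pt) (x : pt) : R := 1 - 2 * (det2 x b c / det2 a b c).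

Lemma cr_hat_P1 (a b c : pt) : P1 (cr_hat a b c).
Proof.
exists (1 - 2 * ((b.1 * c.2 - c.1 * b.2) / det2 a b c)),
  (- 2 * ((b.2 - c.2) / det2 a b c)), (- 2 * ((c.1 - b.1) / det2 a b c)).
by move=> x; rewrite /cr_hat; move: (det2 a b c)^-1 => iD; rewrite /det2; ring.
Qed.

Lemma det2_rot (a b c : pt) : det2 b c a = det2 a b c.
Proof. by rewrite /det2; ring. Qed.

Lemma cr_hat_mids (a b c : pt) : det2 a b c != 0 ->
  [/\ cr_hat a b c (midpt b c) = 1, cr_hat a b c (midpt c a) = 0
    & cr_hat a b c (midpt a b) = 0].
Proof.
by rewrite /cr_hat /midpt /det2 /= => hD; split; field.
Qed.

Definition cr_basis (z : pt) (t : tri) : pt -> R :=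
  if z == midpt t.1.2 t.2 then cr_hat t.1.1 t.1.2 t.2
  else if z == midpt t.2 t.1.1 then cr_hat t.1.2 t.2 t.1.1
  else if z == midpt t.1.1 t.1.2 then cr_hat t.2 t.1.1 t.1.2 else fun=> 0.

Lemma cr_basis_P1 (z : pt) (t : tri) : P1 (cr_basis z t).
Proof.
rewrite /cr_basis; do 3 (case: eqP => _; first exact: cr_hat_P1).
by exists 0, 0, 0 => x; rewrite !mul0r !addr0.
Qed.

Lemma cr_basis_mids (z y : pt) (t : tri) : Defs.nondegenerate t -> y \in mids t ->
  cr_basis z t y = (y == z)%:R.
Proof.
case: t => [[a b] c]; rewrite /Defs.nondegenerate /mids /cr_basis /= => hD.
have [h11 h12 h13] := cr_hat_mids hD.
have [h21 h22 h23] : [/\ cr_hat b c a (midpt c a) = 1, cr_hat b c a (midpt a b) = 0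
    & cr_hat b c a (midpt b c) = 0] by apply: cr_hat_mids; rewrite det2_rot.
have [h31 h32 h33] : [/\ cr_hat c a b (midpt a b) = 1, cr_hat c a b (midpt b c) = 0
    & cr_hat c a b (midpt c a) = 0] by apply: cr_hat_mids; rewrite -det2_rot.
rewrite !inE; have [<- hy|yz hy] := eqVneq y z.
  do 3 (case: eqP => [->|?] //).
  by case/or3P: hy => /eqP.
by do 3 (case: eqP => [ez|_]; first by move: yz; rewrite ez;
  case/or3P: hy => /eqP ->; rewrite ?eqxx).
Qed.

End CrouzeixRaviartBasis.

Section Mesh.
Variable R : realType.
Local Notation pt := (R * R)%type.
Local Notation tri := (pt * pt * pt)%type.
Variable Th : seq tri.

Lemma Mhi_mids (y : pt) : y \in Mhi Th -> exists2 t, t \in Th & y \in mids t.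
Proof.
rewrite mem_undup => /mapP[e]; rewrite mem_filter => /andP[_ /flatten_mapP[t tTh et]] ->.
by exists t => //; apply: (map_f (fun e => midpt e.1 e.2) et).
Qed.

Lemma midpt_segment (a b : pt) : Defs.segment a b (midpt a b).
Proof.
exists (1 / 2); split; first by rewrite divr_ge0.
  by rewrite ler_pdivrMr // mul1r ler1n.
by rewrite /midpt /pcomb /=; congr pair; field.
Qed.

Lemma Mh_Mhi_or_bdry (y : pt) : y \in Mh Th -> y \in Mhi Th \/ bdry Th y.
Proof.
rewrite mem_undup => /flatten_mapP[t tTh /mapP[e et ->]].
have [e_int|e_bdry] := pselect (int_edge Th e).
  left; rewrite mem_undup; apply/mapP; exists e => //; rewrite mem_filter.
  by apply/andP; split; [exact/asboolP | apply/flatten_mapP; exists t].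
by right; apply: (contrapT e_bdry); apply: midpt_segment.
Qed.

Lemma crval_mids (w : tri -> pt -> R) (y : pt) : y \in Mhi Th ->
  exists2 t, t \in Th & y \in mids t /\ crval Th w y = w t y.
Proof.
move=> /Mhi_mids hy; have yTh : has (fun t => y \in mids t) Th by apply/hasP.
exists (nth (tri0 R) Th (find (fun t => y \in mids t) Th)).
  by apply: mem_nth; rewrite -has_find.
by split=> //; apply: (nth_find (tri0 R) yTh).
Qed.

Lemma Vnc_crvalE (w : tri -> pt -> R) (t : tri) (y : pt) :
  Vnc Th w -> t \in Th -> y \in mids t -> y \in Mhi Th -> w t y = crval Th w y.
Proof.
move=> [_ w_cont _] tTh yt /(crval_mids w)[t' t'Th [yt' ->]].
exact: w_cont.
Qed.

Lemma Vh_addZ (u v : pt -> R) (k : R) :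
  Vh Th u -> Vh Th v -> Vh Th (fun x => u x + k * v x).
Proof.
move=> [u_P2 u_cont u_bdry] [v_P2 v_cont v_bdry]; split.
- move=> t tTh; have [p [a0 [a1 [a2 [a3 [a4 [a5 hp]]]]]] up] := u_P2 t tTh.
  have [q [b0 [b1 [b2 [b3 [b4 [b5 hq]]]]]] vq] := v_P2 t tTh.
  exists (fun x => p x + k * q x); last by move=> x hx; rewrite up // vq.
  exists (a0 + k * b0), (a1 + k * b1), (a2 + k * b2), (a3 + k * b3),
    (a4 + k * b4), (a5 + k * b5) => x; rewrite hp hq; ring.
- move=> x; have := continuousD (u_cont x) (continuousM (@cst_continuous _ R k x) (v_cont x)).
  exact.
- by move=> x hx; rewrite u_bdry // v_bdry // mulr0 addr0.
Qed.

Definition mid_weight (z : pt) : R :=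
  \sum_(t <- Th) (area t / 3 * \sum_(y <- mids t) (y == z)%:R).

Lemma mid_weight_gt0 (z : pt) : (forall t, t \in Th -> Defs.nondegenerate t) ->
  z \in Mhi Th -> 0 < mid_weight z.
Proof.
move=> ndTh /Mhi_mids[t0 t0Th zt0].
have term_ge0 t : 0 <= area t / 3 * \sum_(y <- mids t) (y == z)%:R.
  by rewrite mulr_ge0 ?divr_ge0 ?normr_ge0 ?sumr_ge0.
rewrite lt_def sumr_ge0 ?andbT // psumr_neq0 //; apply/hasP; exists t0 => //=.
rewrite mulr_gt0 ?divr_gt0 ?normr_gt0 ?ndTh //.
rewrite lt_def sumr_ge0 ?andbT // psumr_neq0 //; apply/hasP; exists z => //.
by rewrite eqxx ltr01.
Qed.

End Mesh.

Section TestFunction.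
Variable R : realType.
Local Notation pt := (R * R)%type.
Local Notation tri := (pt * pt * pt)%type.
Variables (Th : seq tri) (psi : pt -> pt -> R) (z : pt).
Hypothesis ndTh : forall t, t \in Th -> Defs.nondegenerate t.
Hypothesis zMhi : z \in Mhi Th.

Definition cr_test (k : R) (t : tri) (x : pt) : R := k * cr_basis z t x.

Lemma Vnc_cr_test (k : R) : Vnc Th (cr_test k).
Proof.
split.
- move=> t _; have [a0 [a1 [a2 ha]]] := cr_basis_P1 z t.
  by exists (k * a0), (k * a1), (k * a2) => x; rewrite /cr_test ha; ring.
- move=> t t' y tTh t'Th yt yt'.
  by rewrite /cr_test (cr_basis_mids _ (ndTh tTh) yt) (cr_basis_mids _ (ndTh t'Th) yt').
- move=> t y tTh yt yMhi; rewrite /cr_test (cr_basis_mids _ (ndTh tTh) yt).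
  have /negbTE -> : y != z by apply: contraNneq yMhi => ->.
  by rewrite mulr0.
Qed.

Lemma Pi_h_cr_test (k : R) : Pi_h Th psi (cr_test k) = (fun x => k * psi z x).
Proof.
apply: funext => x; rewrite /Pi_h (eq_big_seq (fun y => k * (y == z)%:R * psi y x)).
  rewrite (bigD1_seq z) ?undup_uniq //= big1 ?eqxx ?mulr1 ?addr0 //.
  by move=> y /negbTE ->; rewrite mulr0 mul0r.
move=> y yMhi; have [t tTh [yt ->]] := crval_mids (cr_test k) yMhi.
by rewrite /cr_test (cr_basis_mids _ (ndTh tTh) yt).
Qed.

Lemma ip_h_cr_test (sigma : tri -> pt -> R) (k : R) : Vnc Th sigma ->
  ip_h Th sigma (cr_test k) = k * crval Th sigma z * mid_weight Th z.
Proof.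
move=> Vsigma; rewrite /ip_h /mid_weight mulr_sumr; apply: eq_big_seq => t tTh.
rewrite mulrCA; congr (_ * _); rewrite mulr_sumr; apply: eq_big_seq => y yt.
rewrite /cr_test (cr_basis_mids _ (ndTh tTh) yt); have [yz|_] := eqVneq y z; last by rewrite !mulr0.
by rewrite yz in yt *; rewrite (Vnc_crvalE Vsigma tTh yt zMhi); ring.
Qed.

End TestFunction.

Lemma nodal_basis_Mh (R : realType) (Th : seq ((R * R) * (R * R) * (R * R)))
    (psi : R * R -> R * R -> R) (z y : R * R) :
  nodal_basis Th psi -> z \in Mhi Th -> y \in Mh Th -> psi z y = (y == z)%:R.
Proof.
move=> psi_nodal zMhi yMh; have [[_ _ psi_bdry] psi_nodes] := psi_nodal z (or_intror zMhi).
have [yMhi|ybdry] := Mh_Mhi_or_bdry yMh; first exact: psi_nodes (or_intror yMhi).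
have [yz|_] := eqVneq y z; last by rewrite psi_bdry.
rewrite yz in ybdry; have := psi_nodes z (or_intror zMhi).
by rewrite psi_bdry // eqxx => /eqP; rewrite eq_sym oner_eq0.
Qed.

Theorem lemma3p2 (R : realType) (Th : seq (((R*R)*(R*R)*(R*R))%type)) (f chi : (R*R)%type -> R)
  (psi : (R*R)%type -> (R*R)%type -> R) (uh : (R*R)%type -> R) (sigmah : ((R*R)*(R*R)*(R*R))%type -> (R*R)%type -> R) :
  conforming Th ->
  connected (Omega Th) ->
  L2 (Omega Th) f ->
  {within Omega_bar Th, continuous chi} ->
  H1 (Omega Th) chi ->
  (forall x, bdry Th x -> chi x <= 0) ->
  nodal_basis Th psi ->
  Kh Th chi uh ->
  (forall vh, Kh Th chi vh ->
     L2ip Th f (fun x => vh x - uh x) <= a_form Th uh (fun x => vh x - uh x)) ->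
  Vnc Th sigmah ->
  (forall vh, Vnc Th vh ->
     ip_h Th sigmah vh = L2ip Th f (Pi_h Th psi vh) - a_form Th uh (Pi_h Th psi vh)) ->
  forall z, z \in Mhi Th ->
    crval Th sigmah z <= 0 /\ (chi z < uh z -> crval Th sigmah z = 0).
Proof.
move=> [_ [ndTh _]] _ _ _ _ _ psi_nodal [Vuh uh_ge] VI Vsigma sigma_def z zMhi.
have test k : (forall y, y \in Mh Th -> chi y <= uh y + k * (y == z)%:R) ->
    k * crval Th sigmah z * mid_weight Th z <= 0.
  move=> shift_ge; have Kshift : Kh Th chi (fun x => uh x + k * psi z x).
    split; first by apply: Vh_addZ => //; case: (psi_nodal z (or_intror zMhi)).
    by move=> y yMh; rewrite (nodal_basis_Mh psi_nodal zMhi yMh); apply: shift_ge.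
  move: (VI _ Kshift); under eq_fun do rewrite addrAC subrr add0r.
  rewrite -subr_le0 -(Pi_h_cr_test psi ndTh zMhi) -sigma_def; last exact: Vnc_cr_test.
  by rewrite (ip_h_cr_test ndTh zMhi _ Vsigma).
have weight_gt0 := mid_weight_gt0 ndTh zMhi.
have sigma_le0 : crval Th sigmah z <= 0.
  rewrite -(pmulr_lle0 _ weight_gt0) -[X in X * _]mul1r; apply: test => y yMh.
  by rewrite mul1r (le_trans (uh_ge y yMh)) // lerDl.
split=> // chi_lt_uh; apply/eqP; rewrite eq_le sigma_le0 /=.
have := test (chi z - uh z); rewrite -mulrA nmulr_rle0 ?subr_lt0 // pmulr_lge0 //.
apply=> y yMh; have [->|yz] := eqVneq y z; last by rewrite mulr0 addr0 uh_ge.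
by rewrite mulr1 addrC subrK.
Qed.
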